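(* For $n\ge1$ let $M_n\in\mathbb R^{n\times n}$ be the matrix with entries $(M_n)_{ij}=(i-j)^2$. Then $\operatorname{st}_+(M_n)\le\lceil n/2\rceil+2$.
   Context: The SNT-rank $\operatorname{st}_+(A)$ of a symmetric entrywise nonnegative $n\times n$ matrix $A$ is the minimal $k$ such that $A=BCB^T$ with $B$ an entrywise nonnegative $n\times k$ matrix and $C$ a symmetric entrywise nonnegative $k\times k$ matrix. *)

From mathcomp Require Import all_boot all_order all_algebra.
From mathcomp Require Import reals.
Set Implicit Arguments. Unset Strict Implicit. Unset Printing Implicit Defensive.
Import Order.TTheory GRing.Theory Num.Theory.
Local Open Scope ring_scope.

Definition nonneg_mx (R : realType) m n (A : 'M[R]_(m, n)) : Prop :=
  forall i j, 0 <= A i j.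

Definition snt_factorization (R : realType) n k (A : 'M[R]_n) : Prop :=
  exists (B : 'M[R]_(n, k)) (C : 'M[R]_k),
    [/\ nonneg_mx B, nonneg_mx C, C^T = C & A = B *m C *m B^T].

(* st_+(A) <= m, i.e. the minimal such k is at most m *)
Definition snt_rank_le (R : realType) n (A : 'M[R]_n) (m : nat) : Prop :=
  exists k : nat, (k <= m)%N /\ snt_factorization k A.

(* M_n with entries (i - j)^2, indices 1-based (same as 0-based) *)
Definition Msq (R : realType) n : 'M[R]_n :=
  \matrix_(i < n, j < n) (((i : nat)%:R - (j : nat)%:R) ^+ 2 : R).

From mathcomp Require Import all_boot all_order all_algebra.
From mathcomp Require Import reals.
From mathcomp Require Import zify ring lra.
Set Implicit Arguments. Unset Strict Implicit. Unset Printing Implicit Defensive.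
Import Order.TTheory GRing.Theory Num.Theory.
Local Open Scope ring_scope.

(* Put N = n - 1 and fold the points 0, ..., N about N/2:
   fold x = min(x, N - x) takes values in 0, ..., ceil(n/2) - 1.  For any
   reals x, y the elementary "folding identity"
     (x - y)^2 = (fold x - fold y)^2 + up x * down y + down x * up y,
   with up x = max(0, 2x - N) and down x = max(0, N - 2x), holds.  Hence
     M_n = S M_m S^T + Z [[0,1],[1,0]] Z^T     (m = ceil(n/2)),
   where S is the 0/1 matrix of the folding map 'I_n -> 'I_m and Z is the
   nonnegative n x 2 matrix with columns up, down. *)

Section SntFactorizations.
Variable R : realType.

Lemma nonneg_row_mx m n1 n2 (A1 : 'M[R]_(m, n1)) (A2 : 'M[R]_(m, n2)) :
  nonneg_mx A1 -> nonneg_mx A2 -> nonneg_mx (row_mx A1 A2).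
Proof. by move=> A1ge0 A2ge0 i j; rewrite /row_mx mxE; case: split. Qed.

Lemma nonneg_block_diag k1 k2 (C1 : 'M[R]_k1) (C2 : 'M[R]_k2) :
  nonneg_mx C1 -> nonneg_mx C2 -> nonneg_mx (block_mx C1 0 0 C2).
Proof.
move=> C1ge0 C2ge0 i j; rewrite /block_mx /col_mx mxE.
by case: split => a; rewrite nonneg_row_mx // => ? ?; rewrite mxE.
Qed.

(* The sum of two SNT-factorizable matrices is SNT-factorizable, with the
   inner dimensions added: stack the B's side by side, C's block-diagonally. *)
Lemma snt_factorization_add n k1 k2 (A1 A2 : 'M[R]_n) :
  snt_factorization k1 A1 -> snt_factorization k2 A2 ->
  snt_factorization (k1 + k2) (A1 + A2).
Proof.
move=> [B1 [C1 [B1ge0 C1ge0 C1sym ->]]] [B2 [C2 [B2ge0 C2ge0 C2sym ->]]].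
exists (row_mx B1 B2), (block_mx C1 0 0 C2); split.
- exact: nonneg_row_mx.
- exact: nonneg_block_diag.
- by rewrite tr_block_mx !trmx0 C1sym C2sym.
by rewrite tr_row_mx mul_row_block mul_row_col !mulmx0 addr0 add0r.
Qed.

Definition select_mx n m (f : 'I_n -> 'I_m) : 'M[R]_(n, m) :=
  \matrix_(i, a) ((a == f i)%:R).

Lemma nonneg_select_mx n m (f : 'I_n -> 'I_m) : nonneg_mx (select_mx f).
Proof. by move=> i a; rewrite mxE ler0n. Qed.

Lemma select_mx_conj n m (f : 'I_n -> 'I_m) (C : 'M[R]_m) :
  select_mx f *m C *m (select_mx f)^T = \matrix_(i, j) C (f i) (f j).
Proof.
apply/matrixP => i j; rewrite !mxE (bigD1 (f j)) //= big1 ?addr0 => [|b /negbTE fjNb].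
  rewrite !mxE eqxx mulr1 (bigD1 (f i)) //= big1 ?addr0 => [|a /negbTE fiNa].
    by rewrite mxE eqxx mul1r.
  by rewrite mxE fiNa mul0r.
by rewrite !mxE fjNb mulr0.
Qed.

Lemma snt_factorization_pullback n m (f : 'I_n -> 'I_m) (C : 'M[R]_m) :
  nonneg_mx C -> C^T = C ->
  snt_factorization m (\matrix_(i, j) C (f i) (f j)).
Proof.
move=> Cge0 Csym; exists (select_mx f), C; split => //.
  exact: nonneg_select_mx.
by rewrite select_mx_conj.
Qed.

(* u v^T + v u^T = [u v] [[0,1],[1,0]] [u v]^T for nonnegative u, v. *)
Lemma snt_factorization_rank2 n (u v : 'I_n -> R) :
  (forall i, 0 <= u i) -> (forall i, 0 <= v i) ->
  snt_factorization 2 (\matrix_(i, j) (u i * v j + v i * u j)).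
Proof.
move=> uge0 vge0.
exists (\matrix_(i, c) (if c == ord0 then u i else v i)),
       (\matrix_(c, d) ((c != d)%:R)); split.
- by move=> i c; rewrite mxE; case: ifP.
- by move=> c d; rewrite mxE ler0n.
- by apply/matrixP => c d; rewrite !mxE eq_sym.
apply/matrixP => i j; rewrite !mxE !big_ord_recr !big_ord0 /= !mxE /=.
rewrite !big_ord_recr !big_ord0 /= !mxE /=; ring.
Qed.

Lemma nonneg_Msq n : nonneg_mx (Msq R n).
Proof. by move=> i j; rewrite mxE sqr_ge0. Qed.

Lemma Msq_sym n : (Msq R n)^T = Msq R n.
Proof. by apply/matrixP => i j; rewrite !mxE -sqrrN opprB. Qed.

End SntFactorizations.

Section Folding.
Variable R : realFieldType.
Variable N : R.

Definition fold (x : R) : R := Num.min x (N - x).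
Definition up (x : R) : R := Num.max 0 (2 * x - N).
Definition down (x : R) : R := Num.max 0 (N - 2 * x).

Lemma up_ge0 x : 0 <= up x. Proof. by rewrite le_max lexx. Qed.
Lemma down_ge0 x : 0 <= down x. Proof. by rewrite le_max lexx. Qed.

Lemma fold_low x :
  2 * x <= N -> [/\ fold x = x, up x = 0 & down x = N - 2 * x].
Proof.
move=> lowx; rewrite /fold /up /down.
by split; [rewrite min_l | rewrite max_l | rewrite max_r] => //; lra.
Qed.

Lemma fold_high x :
  N <= 2 * x -> [/\ fold x = N - x, up x = 2 * x - N & down x = 0].
Proof.
move=> highx; rewrite /fold /up /down.
by split; [rewrite min_r | rewrite max_r | rewrite max_l] => //; lra.
Qed.

Lemma folding_identity x y :
  (x - y) ^+ 2 = (fold x - fold y) ^+ 2 + up x * down y + down x * up y.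
Proof.
have [lowx|highx] := lerP (2 * x) N; have [lowy|highy] := lerP (2 * y) N.
- by have [-> -> ->] := fold_low lowx; have [-> -> ->] := fold_low lowy; ring.
- have [-> -> ->] := fold_low lowx.
  by have [-> -> ->] := fold_high (ltW highy); ring.
- have [-> -> ->] := fold_high (ltW highx).
  by have [-> -> ->] := fold_low lowy; ring.
- have [-> -> ->] := fold_high (ltW highx).
  by have [-> -> ->] := fold_high (ltW highy); ring.
Qed.

End Folding.

Lemma fold_index_lt n (i : 'I_n) : (minn i (n.-1 - i) < uphalf n)%N.
Proof. have := ltn_ord i; rewrite uphalfE; lia. Qed.

Definition fold_index n (i : 'I_n) : 'I_(uphalf n) := Ordinal (fold_index_lt i).

Lemma natr_fold_index (R : realFieldType) n (i : 'I_n) :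
  (fold_index i)%:R = fold (n.-1)%:R (i%:R : R).
Proof.
have ltin := ltn_ord i; rewrite /fold.
have [lowi|highi] := leqP i (n.-1 - i).
  have -> : fold_index i = i :> nat by rewrite /=; lia.
  by rewrite min_l // -natrB ?ler_nat //; lia.
have -> : fold_index i = (n.-1 - i)%N :> nat by rewrite /=; lia.
by rewrite min_r -natrB ?ler_nat //; lia.
Qed.

Lemma Msq_folding (R : realType) n :
  Msq R n =
    \matrix_(i, j) Msq R (uphalf n) (fold_index i) (fold_index j) +
    \matrix_(i, j) (up (n.-1)%:R (i%:R : R) * down (n.-1)%:R j%:R
                    + down (n.-1)%:R (i%:R : R) * up (n.-1)%:R j%:R).
Proof.
apply/matrixP => i j; rewrite !mxE (folding_identity (n.-1)%:R).
by rewrite !natr_fold_index addrA.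
Qed.

Theorem mainTheorem9 (R : realType) (n : nat) :
  (1 <= n)%N -> snt_rank_le (Msq R n) (uphalf n + 2).
Proof.
move=> _; exists (uphalf n + 2)%N; split => //.
rewrite Msq_folding; apply: snt_factorization_add.
  exact/snt_factorization_pullback/Msq_sym/nonneg_Msq.
by apply: snt_factorization_rank2 => i; [apply: up_ge0 | apply: down_ge0].
Qed.
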